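(* Let $(d(t),\,t\ge0)$ be a nonnegative, locally integrable demand function and fix the initial energy configuration. For a discharge-only policy $\pi$ define $\tau(\pi)=\sup\{\tilde T\ge0:\ \text{the unserved energy of }\pi\text{ over }[0,\tilde T]\text{ equals }0\}$. Then $\tau(\mathrm{GGDDF})\ge\tau(\pi)$ for every discharge-only policy $\pi$; that is, the GGDDF policy maximises the time until the stores are first unable to serve all demand.
   Context: A finite set $\mathcal S$ of energy stores is given. Store $i\in\mathcal S$ has capacity $\overline E_i>0$ and maximum discharge rate $P_i>0$. A (discharge-only) policy is a choice of measurable rate functions $(r_i(t),\,t\ge0)$, $i\in\mathcal S$, with stored energies $E_i(t)=E_i(0)-\int_0^t r_i(u)\,du$, subject to $0\le E_i(t)\le\overline E_i$, $0\le r_i(t)\le P_i$ and $\sum_{i\in\mathcal S}r_i(t)\le d(t)$ for all $t\ge0$, where $(d(t),\,t\ge0)$ is a nonnegative demand function. The unserved energy over $[0,T]$ is $\int_0^T\max\bigl(d(t)-\sum_{i}r_i(t),0\bigr)dt$. GGDDF (greedy greatest-discharge-duration-first) policy: at (almost) every time $t$, the total served rate is $\bar d(t)=\min\bigl(d(t),\sum_{i:E_i(t)>0}P_i\bigr)$, and it is allocated as follows: the nonempty stores are partitioned into groups $G_1,G_2,\dots$ of equal discharge-duration $E_i(t)/P_i$, listed in strictly decreasing order of that duration; letting $m$ be the least index with $\sum_{k\le m}\sum_{i\in G_k}P_i\ge\bar d(t)$, every store in $G_k$ with $k<m$ discharges at rate $P_i$, every store $i\in G_m$ discharges at rate $\lambda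 P_i$ with $\lambda\in(0,1]$ chosen so that $\sum_i r_i(t)=\bar d(t)$, and all other stores have rate $0$ (all rates are $0$ if $\bar d(t)=0$). *)

From HB Require Import structures.
From mathcomp Require Import all_boot all_order all_algebra.
From mathcomp Require Import all_classical all_reals all_analysis.
Set Implicit Arguments. Unset Strict Implicit. Unset Printing Implicit Defensive.
Import Order.TTheory GRing.Theory Num.Theory.
Import numFieldNormedType.Exports.
Local Open Scope classical_set_scope.
Local Open Scope ring_scope.

Section Storage.
Variables (R : realType) (S : finType).

Local Notation mu := (@lebesgue_measure R).

Definition energy (E0 : S -> R) (r : S -> R -> R) (i : S) (t : R) : R :=
  E0 i - Rintegral mu (`[0%R, t] : set R) (r i).

Definition policy (Ebar P E0 : S -> R) (d : R -> R) (r : S -> R -> R) : Prop :=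
  (forall i : S, measurable_fun (`[0%R, +oo[ : set R) (r i)) /\
  (forall t, 0 <= t ->
     (forall i, 0 <= energy E0 r i t <= Ebar i) /\
     (forall i, 0 <= r i t <= P i) /\
     \sum_(i : S) r i t <= d t).

Definition unserved (d : R -> R) (r : S -> R -> R) (T : R) : \bar R :=
  (\int[mu]_(x in (`[0%R, T] : set R)) (Num.max (d x - \sum_(i : S) r i x) 0)%:E)%E.

Definition tau (d : R -> R) (r : S -> R -> R) : \bar R :=
  ereal_sup (EFin @` [set T | 0 <= T /\ unserved d r T = 0%E]).

(* Groups are the classes of nonempty stores
   with equal duration E_i/P_i; the group G_m is the one of duration delta,
   the groups G_k, k < m, are those of strictly larger duration. *)
Definition ggddf_alloc (P : S -> R) (E : S -> R) (D : R) (rho : S -> R) : Prop :=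
  let dbar := Num.min D (\sum_(i | 0 < E i) P i) in
  let dur i := E i / P i in
  (dbar = 0 /\ forall i, rho i = 0) \/
  (0 < dbar /\
   exists (delta lambda : R),
     (exists j, 0 < E j /\ dur j = delta) /\
     (* m is the least index with cumulative power >= dbar *)
     \sum_(i | (0 < E i) && (delta < dur i)) P i < dbar /\
     dbar <= \sum_(i | (0 < E i) && (delta <= dur i)) P i /\
     0 < lambda <= 1 /\
     (forall i, 0 < E i -> delta < dur i -> rho i = P i) /\
     (forall i, 0 < E i -> dur i = delta -> rho i = lambda * P i) /\
     (forall i, 0 < E i -> dur i < delta -> rho i = 0) /\
     (forall i, ~ (0 < E i) -> rho i = 0) /\
     \sum_(i : S) rho i = dbar).

Definition ggddf (Ebar P E0 : S -> R) (d : R -> R) (r : S -> R -> R) : Prop :=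
  policy Ebar P E0 d r /\
  {ae mu, forall t, 0 <= t ->
     ggddf_alloc P (fun i => energy E0 r i t) (d t) (fun i => r i t)}.

End Storage.

From HB Require Import structures.
From mathcomp Require Import all_boot all_order all_algebra.
From mathcomp Require Import all_classical all_reals all_analysis.
From mathcomp Require Import measurable_realfun lra.
Import Order.TTheory GRing.Theory Num.Theory.
Import numFieldNormedType.Exports.
Local Open Scope classical_set_scope.
Local Open Scope ring_scope.
Set Implicit Arguments. Unset Strict Implicit. Unset Printing Implicit Defensive.

(* It suffices to show: whenever an admissible policy r has zero unserved
   energy on [0, T], so has the GGDDF policy g.  Let K be the set of stores
   that still hold energy under g at time T.  For almost every x in [0, T]
     shortfall_g(x) + sum_{i \notin K} g_i(x)
       <= shortfall_r(x) + sum_{i \notin K} r_i(x)          (pointwise bound)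
   Indeed, either all stores of K discharge at full power under g, so g serves
   at least what r can draw from K; or some j in K is below full power, and
   then GGDDF serves all demand and no store outside K is active: an active
   store has duration at least that of j, GGDDF preserves the order of
   durations, so that store would still hold energy at T.  Integrating over
   [0, T], the sums become the energies drained from the stores outside K:
   everything under g, at most that under r; so g is unserved at most as much
   as r. *)

Section BoundedRates.
Variable R : realType.
Local Notation mu := (@lebesgue_measure R).

Lemma integrable_bounded (D : set R) (f : R -> R) (M : R) :
  measurable D -> D `<=` (`[0%R, +oo[ : set R) -> (mu D < +oo)%E ->
  measurable_fun (`[0%R, +oo[ : set R) f -> (forall x, 0 <= x -> `|f x| <= M) ->
  mu.-integrable D (EFin \o f).
Proof.
move=> mD D0 muD mf fM; apply/integrableP; split.
  by apply/measurable_EFinP; apply: measurable_funS mf.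
apply: (@le_lt_trans _ _ (\int[mu]_(x in D) (cst M%:E) x)%E).
  apply: ge0_le_integral => //.
  - by apply/measurable_EFinP; apply: measurableT_comp => //;
       apply: measurable_funS mf.
  - move=> x Dx; rewrite lee_fin /=; apply: fM.
    by have := D0 _ Dx; rewrite /= in_itv /= andbT.
rewrite integral_cst //.
have M0 : 0 <= M by apply: le_trans (fM 0 (lexx 0)).
by rewrite lte_mul_pinfty.
Qed.

Lemma bounded_itv_finite (a b : R) (c : bool) :
  (mu [set` Interval (BSide c a) (BRight b)] < +oo)%E.
Proof. by rewrite lebesgue_measure_itv /=; case: ifP => _; rewrite ?ltry. Qed.

Lemma itv_sub_halfline (a b : R) (c : bool) : 0 <= a ->
  [set` Interval (BSide c a) (BRight b)] `<=` (`[0%R, +oo[ : set R).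
Proof.
move=> a0 x /=; rewrite !in_itv /= andbT => /andP[+ _].
case: c => /= h; [exact: le_trans h| exact: (le_trans a0 (ltW h))].
Qed.

Lemma Rintegral_ae_le (D : set R) (f1 f2 : R -> R) (M1 M2 : R) :
  measurable D -> D `<=` (`[0%R, +oo[ : set R) -> (mu D < +oo)%E ->
  measurable_fun (`[0%R, +oo[ : set R) f1 ->
  measurable_fun (`[0%R, +oo[ : set R) f2 ->
  (forall x, 0 <= x -> 0 <= f1 x <= M1) ->
  (forall x, 0 <= x -> 0 <= f2 x <= M2) ->
  {ae mu, forall x, D x -> f1 x <= f2 x} ->
  \int[mu]_(x in D) f1 x <= \int[mu]_(x in D) f2 x.
Proof.
move=> mD D0 muD mf1 mf2 b1 b2 ae12.
have i1 : mu.-integrable D (EFin \o f1).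
  apply: (@integrable_bounded _ _ M1) => // x x0.
  by case/andP: (b1 x x0) => h1 h2; rewrite ger0_norm.
have i2 : mu.-integrable D (EFin \o f2).
  apply: (@integrable_bounded _ _ M2) => // x x0.
  by case/andP: (b2 x x0) => h1 h2; rewrite ger0_norm.
have pos x : D x -> 0 <= x by move=> /D0; rewrite /= in_itv /= andbT.
rewrite /Rintegral fine_le //; first exact: integrable_fin_num.
  exact: integrable_fin_num.
apply: ae_ge0_le_integral => //.
- by move=> x Dx; rewrite lee_fin; case/andP: (b1 x (pos x Dx)).
- by case/integrableP: i1.
- by move=> x Dx; rewrite lee_fin; case/andP: (b2 x (pos x Dx)).
- by case/integrableP: i2.
Qed.

End BoundedRates.

Section EnergyBalance.
Variables (R : realType) (S : finType) (P E0 : S -> R) (r : S -> R -> R).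
Local Notation mu := (@lebesgue_measure R).
Hypothesis r_meas : forall i, measurable_fun (`[0%R, +oo[ : set R) (r i).
Hypothesis r_bnd : forall t, 0 <= t -> forall i, 0 <= r i t <= P i.

Lemma rate_integrable i a b c : 0 <= a ->
  mu.-integrable [set` Interval (BSide c a) (BRight b)] (EFin \o r i).
Proof.
move=> a0; apply: (@integrable_bounded _ _ _ (P i)) => //.
- exact: itv_sub_halfline.
- exact: bounded_itv_finite.
- by move=> x x0; have /andP[h1 h2] := r_bnd x0 i; rewrite ger0_norm.
Qed.

Lemma energy_drop i a b : 0 <= a <= b ->
  energy E0 r i a - energy E0 r i b = \int[mu]_(x in `]a, b]) r i x.
Proof.
case/andP=> a0 ab; rewrite /energy opprB addrC addrA addrNK.
rewrite -(@Rintegral_itvB _ (r i) (BLeft 0) (BRight b) a) //.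
exact: rate_integrable.
Qed.

Lemma drained_bounds i a b : 0 <= a <= b ->
  0 <= \int[mu]_(x in `]a, b]) r i x <= P i * (b - a).
Proof.
case/andP=> a0 ab; apply/andP; split.
  apply: Rintegral_ge0 => x /=; rewrite in_itv /= => /andP[ax _].
  by case/andP: (r_bnd (le_trans a0 (ltW ax)) i).
apply: le_trans.
  apply: (@le_Rintegral _ _ _ mu _ (r i) (fun _ => P i)) => //.
  - exact: rate_integrable.
  - apply: (@integrable_bounded _ _ _ `|P i|) => //.
    + exact: itv_sub_halfline.
    + exact: bounded_itv_finite.
  - move=> x /=; rewrite in_itv /= => /andP[ax _].
    by case/andP: (r_bnd (le_trans a0 (ltW ax)) i).
rewrite Rintegral_cst //.
have := lebesgue_measure_itv `]a, b]; rewrite /= lte_fin => ->.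
by case: ltgtP ab => // <- _; rewrite subrr mulr0.
Qed.

Lemma energy_nonincreasing i x y : 0 <= x <= y ->
  energy E0 r i y <= energy E0 r i x.
Proof.
move=> xy; rewrite -subr_ge0 (energy_drop i xy).
by case/andP: (drained_bounds i xy).
Qed.

End EnergyBalance.

Lemma policy_facts (R : realType) (S : finType) (Ebar P E0 : S -> R)
    (d : R -> R) (q : S -> R -> R) :
  policy Ebar P E0 d q ->
  [/\ forall i, measurable_fun (`[0%R, +oo[ : set R) (q i),
      forall t, 0 <= t -> forall i, 0 <= q i t <= P i,
      forall t, 0 <= t -> \sum_i q i t <= d t &
      forall t, 0 <= t -> forall i, 0 <= energy E0 q i t].
Proof.
case=> hm h; split => //.
- by move=> t t0; case: (h t t0) => _ [].
- by move=> t t0; case: (h t t0) => _ [].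
- by move=> t t0 i; case: (h t t0) => /(_ i) /andP[].
Qed.

Section Allocation.
Variables (R : realType) (S : finType) (P E rho : S -> R) (D : R).
Hypothesis P_gt0 : forall k, 0 < P k.
Hypothesis rho_bnd : forall k, 0 <= rho k <= P k.
Hypothesis alloc : ggddf_alloc P E D rho.

Lemma alloc_monotone i j :
  E i / P i < E j / P j -> rho i / P i <= rho j / P j.
Proof.
move: alloc; rewrite /ggddf_alloc /=.
have rj0 : 0 <= rho j / P j.
  by apply: divr_ge0; [case/andP: (rho_bnd j)|exact: ltW].
case=> [[_ h0]|[_ [delta [lam [[j0 _] [_ [_ [/andP[lam0 lam1]
          [hgt [heq [hlt [hemp _]]]]]]]]]]]].
  by rewrite !h0 !mul0r.
have [Ei|Ei] := boolP (0 < E i); last by rewrite hemp ?mul0r //; apply/negP.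
move=> dij.
have Ej : 0 < E j.
  have : 0 < E j / P j by apply: lt_trans dij; apply: divr_gt0.
  by rewrite pmulr_lgt0 // invr_gt0.
have [dl|dg|de] := ltgtP (E i / P i) delta.
- by rewrite hlt // mul0r.
- by rewrite hgt // hgt ?(lt_trans dg dij) // !divff //; exact: lt0r_neq0.
- rewrite heq // hgt //; last by rewrite -de.
  by rewrite mulfK ?divff //; apply: lt0r_neq0.
Qed.

Lemma alloc_active_dominates i j :
  0 < rho i -> 0 < E j -> rho j != P j -> E j / P j <= E i / P i.
Proof.
move: alloc; rewrite /ggddf_alloc /=.
case=> [[_ h0]|[_ [delta [lam [[j0 _] [_ [_ [/andP[lam0 lam1]
          [hgt [heq [hlt [hemp _]]]]]]]]]]]].
  by rewrite h0 ltxx.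
move=> ri Ej rj.
have Ei : 0 < E i.
  by case: (boolP (0 < E i)) => // /negP /hemp h; move: ri; rewrite h ltxx.
have di : delta <= E i / P i.
  by rewrite leNgt; apply/negP => /hlt h; move: ri; rewrite h // ltxx.
apply: le_trans di; rewrite leNgt; apply/negP => /hgt h.
by move: rj; rewrite h // eqxx.
Qed.

Lemma alloc_shortfall_saturates j :
  \sum_k rho k < D -> 0 < E j -> rho j = P j.
Proof.
move: alloc; rewrite /ggddf_alloc /=.
set dbar := Num.min D _ => H.
have [hsum hemp] : \sum_k rho k = dbar /\ forall k, ~ (0 < E k) -> rho k = 0.
  case: H => [[-> h0]|[_ [delta [lam [_ [_ [_ [_ [_ [_ [_ [hemp hs]]]]]]]]]]]].
    by split => //; rewrite big1.
  by [].
move=> sD Ej.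
have dbE : dbar = \sum_(k | 0 < E k) P k.
  rewrite /dbar; case: (leP D (\sum_(k | 0 < E k) P k)) => // hD.
  by move: sD; rewrite hsum /dbar min_l // ltxx.
have : \sum_(k | 0 < E k) (P k - rho k) = 0.
  rewrite sumrB -dbE -hsum (bigID (fun k => 0 < E k)) /=.
  by rewrite addrAC subrr add0r big1 // => k /negP Ek; exact: hemp.
move/psumr_eq0P => h; apply/eqP; rewrite eq_sym -subr_eq0; apply/eqP.
by apply: h => // k _; rewrite subr_ge0; case/andP: (rho_bnd k).
Qed.

End Allocation.

Section Trajectory.
Variables (R : realType) (S : finType).
Local Notation mu := (@lebesgue_measure R).
Variables (Ebar P E0 : S -> R) (d : R -> R) (g : S -> R -> R).
Hypothesis P_gt0 : forall i, 0 < P i.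
Hypothesis g_ggddf : ggddf Ebar P E0 d g.

Let g_meas : forall i, measurable_fun (`[0%R, +oo[ : set R) (g i).
Proof. by case: (policy_facts g_ggddf.1). Qed.
Let g_bnd : forall t, 0 <= t -> forall i, 0 <= g i t <= P i.
Proof. by case: (policy_facts g_ggddf.1). Qed.
Let g_alloc : {ae mu, forall t, 0 <= t ->
     ggddf_alloc P (fun i => energy E0 g i t) (d t) (fun i => g i t)}.
Proof. by case: g_ggddf. Qed.

Let dur i t := energy E0 g i t / P i.

Lemma duration_drop k x y : 0 <= x <= y ->
  dur k x - dur k y = \int[mu]_(t in `]x, y]) (g k t / P k).
Proof.
move=> xy; rewrite /dur -mulrBl (energy_drop E0 g_meas g_bnd k xy).
rewrite RintegralZr //; case/andP: xy => x0 _.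
exact: (rate_integrable g_meas g_bnd k y false x0).
Qed.

Lemma duration_lipschitz k x y : 0 <= x <= y -> 0 <= dur k x - dur k y <= y - x.
Proof.
move=> xy; rewrite /dur -mulrBl (energy_drop E0 g_meas g_bnd k xy).
have /andP[h1 h2] := drained_bounds g_meas g_bnd k xy.
by rewrite divr_ge0 ?(ltW (P_gt0 k)) //= ler_pdivrMr ?P_gt0 // mulrC.
Qed.

(* With w the last time in [u, v] where the order holds (it holds
   at w by continuity), on ]w, v] store i is strictly longer, so by
   alloc_monotone it loses duration no faster than j. *)
Lemma duration_order_persists i j u v :
  0 <= u <= v -> dur j u <= dur i u -> dur j v <= dur i v.
Proof.
case/andP=> u0 uv hu.
pose A := [set x | u <= x <= v /\ dur j x - dur i x <= 0].
have Au : A u by split; [rewrite lexx uv | rewrite subr_le0].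
have hs : has_sup A by split; [exists u | exists v => x [/andP[_ ->]]].
set w := sup A.
have uw : u <= w by apply: sup_upper_bound.
have wv : w <= v by apply: ge_sup; [exists u | move=> x [/andP[_ ->]]].
have w0 : 0 <= w by apply: le_trans uw.
have order_at_w : dur j w - dur i w <= 0.
  apply/ler_addgt0Pr => e e0; rewrite add0r.
  have [x Ax wx] := sup_adherent e0 hs.
  have xw : x <= w by apply: sup_upper_bound.
  case: Ax => /andP[ux _] phx.
  have xw' : 0 <= x <= w by rewrite (le_trans u0 ux).
  have /andP[j1 _] := duration_lipschitz j xw'.
  have /andP[_ i2] := duration_lipschitz i xw'.
  by move: phx wx; rewrite -/w; lra.
have wv' : 0 <= w <= v by rewrite w0 wv.
suff : \int[mu]_(t in `]w, v]) (g i t / P i) <= \int[mu]_(t in `]w, v]) (g j t / P j).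
  by have := duration_drop j wv'; have := duration_drop i wv'; lra.
have frac_bnd k x : 0 <= x -> 0 <= g k x / P k <= 1.
  move=> x0; case/andP: (g_bnd x0 k) => h1 h2.
  by rewrite divr_ge0 ?(ltW (P_gt0 k)) //= ler_pdivrMr ?P_gt0 // mul1r.
apply: (@Rintegral_ae_le _ _ _ _ 1 1) => //.
- exact: itv_sub_halfline.
- exact: bounded_itv_finite.
- by apply: measurable_funM => //; exact: measurable_cst.
- by apply: measurable_funM => //; exact: measurable_cst.
- exact: frac_bnd.
- exact: frac_bnd.
apply: (@filterS _ _ (ae_filter_ringOfSetsType mu) _ _ _ g_alloc).
move=> x hx /=; rewrite in_itv /= => /andP[wx xv].
have x0 : 0 <= x by apply: le_trans w0 (ltW wx).
apply: (alloc_monotone P_gt0 (g_bnd x0) (hx x0)).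
rewrite -/(dur i x) -/(dur j x) -subr_gt0 ltNge; apply/negP => hle.
have : A x by split => //; rewrite (le_trans uw (ltW wx)) xv; lra.
by move/sup_upper_bound => /(_ hs); rewrite leNgt wx.
Qed.

Lemma shortfall_pointwise (K : pred S) (q : S -> R -> R) T x :
  (forall i, K i -> 0 < energy E0 g i T) ->
  (forall i, ~~ K i -> energy E0 g i T <= 0) ->
  0 <= x <= T -> (forall i, 0 <= q i x <= P i) -> \sum_i q i x <= d x ->
  ggddf_alloc P (fun i => energy E0 g i x) (d x) (fun i => g i x) ->
  Num.max (d x - \sum_i g i x) 0 + \sum_(i | ~~ K i) g i x
  <= Num.max (d x - \sum_i q i x) 0 + \sum_(i | ~~ K i) q i x.
Proof.
move=> K_full K_empty /andP[x0 xT] q_bnd q_dem ha.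
have K_pos j : K j -> 0 < energy E0 g j x.
  move=> /K_full Kj; apply: lt_le_trans Kj _.
  by apply: (energy_nonincreasing E0 g_meas g_bnd); rewrite x0 xT.
have [_ _ g_dem _] := policy_facts g_ggddf.1.
have g_sum := g_dem x x0.
have q_out : 0 <= \sum_(i | ~~ K i) q i x.
  by apply: sumr_ge0 => i _; case/andP: (q_bnd i).
have q_split : \sum_i q i x = \sum_(i | K i) q i x + \sum_(i | ~~ K i) q i x.
  by rewrite (bigID K).
rewrite (@max_l _ _ (d x - \sum_i q i x)) ?subr_ge0 //.
have [full|nfull] := boolP [forall j, K j ==> (g j x == P j)].
  have g_split : \sum_i g i x = \sum_(i | K i) P i + \sum_(i | ~~ K i) g i x.
    rewrite (bigID K) /=; congr (_ + _); apply: eq_bigr => j Kj.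
    by move/forallP: full => /(_ j); rewrite Kj /= => /eqP.
  have : \sum_(i | K i) q i x <= \sum_(i | K i) P i.
    by apply: ler_sum => i _; case/andP: (q_bnd i).
  by rewrite (@max_l _ _ (d x - _)) ?subr_ge0 // g_split; lra.
have [j /andP[Kj nj]] : exists j, K j && (g j x != P j).
  by move/forallPn: nfull => [j]; rewrite negb_imply => h; exists j.
have served : d x - \sum_i g i x <= 0.
  rewrite subr_le0 leNgt; apply/negP => lt.
  by move: nj; rewrite (alloc_shortfall_saturates (g_bnd x0) ha lt (K_pos j Kj)) eqxx.
have idle_out : \sum_(i | ~~ K i) g i x = 0.
  apply: big1 => i nKi; apply/eqP; rewrite eq_le; case/andP: (g_bnd x0 i) => -> _.
  rewrite andbT leNgt; apply/negP => gi.
  have o1 := alloc_active_dominates ha gi (K_pos j Kj) nj.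
  have o2 := duration_order_persists (introT andP (conj x0 xT)) o1.
  have : energy E0 g i T / P i <= 0 by rewrite pmulr_lle0 ?invr_gt0 ?K_empty.
  have : 0 < energy E0 g j T / P j by rewrite divr_gt0 ?K_full.
  by move: o2; rewrite /dur; lra.
by rewrite (@max_r _ _ (d x - _)) // idle_out addr0; lra.
Qed.

End Trajectory.

Lemma measurable_sum_filter (R : realType) (S : finType) (D : set R)
    (Pr : pred S) (h : S -> R -> R) :
  (forall i, measurable_fun D (h i)) ->
  measurable_fun D (fun x => \sum_(i | Pr i) h i x).
Proof.
move=> mh.
rewrite (_ : (fun x => _) = (fun x => \sum_(i <- index_enum S)
    (if Pr i then h i else cst 0) x)); last first.
  by apply/funext => x; rewrite big_mkcond; apply: eq_bigr => i _; case: (Pr i).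
by apply: measurable_sum => i; case: (Pr i) => //; exact: measurable_cst.
Qed.

Lemma integral_sum_filter (R : realType) (S : finType) (D : set R)
    (Pr : pred S) (f : S -> R -> \bar R) :
  measurable D -> (forall i, measurable_fun D (f i)) ->
  (forall i x, D x -> (0 <= f i x)%E) ->
  (\int[@lebesgue_measure R]_(x in D) (\sum_(i | Pr i) f i x) =
   \sum_(i | Pr i) \int[@lebesgue_measure R]_(x in D) f i x)%E.
Proof.
move=> mD mf f0; rewrite big_mkcond /=.
under eq_integral do rewrite big_mkcond /=.
rewrite ge0_integral_sum //.
- by apply: eq_bigr => i _; case: (Pr i) => //; rewrite integral0.
- by move=> i; case: (Pr i); [exact: mf| exact: measurable_cst].
- by move=> i x Dx; case: (Pr i) => //; exact: f0.
Qed.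

Section Integration.
Variables (R : realType) (S : finType).
Local Notation mu := (@lebesgue_measure R).
Variables (Ebar P E0 : S -> R) (d : R -> R) (T : R).
Hypothesis T_ge0 : 0 <= T.
Hypothesis d_int : mu.-integrable `[0%R, T] (fun t => (d t)%:E).

Let D := (`[0%R, T] : set R).
Let D_meas : measurable D. Proof. exact: measurable_itv. Qed.
Let D_sub : D `<=` (`[0%R, +oo[ : set R). Proof. exact: itv_sub_halfline. Qed.
Let D_ge0 x : D x -> 0 <= x. Proof. by rewrite /D /= in_itv /= => /andP[]. Qed.
Let d_meas : measurable_fun D d.
Proof. by apply/measurable_EFinP; case/integrableP: d_int. Qed.

Let shortfall (q : S -> R -> R) x := Num.max (d x - \sum_i q i x) 0.

Lemma shortfall_drained_measurable (q : S -> R -> R) (Pr : pred S) :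
  policy Ebar P E0 d q ->
  measurable_fun D (fun x => (shortfall q x + \sum_(i | Pr i) q i x)%:E).
Proof.
case/policy_facts => q_meas _ _ _.
have qD i : measurable_fun D (q i) by apply: measurable_funS (q_meas i).
apply/measurable_EFinP; apply: measurable_funD; last exact: measurable_sum_filter.
apply: measurable_maxr; last exact: measurable_cst.
by apply: measurable_funB => //; apply: measurable_sum_filter.
Qed.

Lemma integral_rate (q : S -> R -> R) i : policy Ebar P E0 d q ->
  (\int[mu]_(x in D) (q i x)%:E = (E0 i - energy E0 q i T)%:E)%E.
Proof.
case/policy_facts => q_meas q_bnd _ _.
rewrite /energy opprB addrC subrK /Rintegral fineK //.
exact: (integrable_fin_num _ (rate_integrable q_meas q_bnd i T true (lexx 0))).
Qed.

Lemma integral_shortfall_drained (q : S -> R -> R) (Pr : pred S) :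
  policy Ebar P E0 d q ->
  (\int[mu]_(x in D) (shortfall q x + \sum_(i | Pr i) q i x)%:E
   = unserved d q T + (\sum_(i | Pr i) (E0 i - energy E0 q i T))%:E)%E.
Proof.
move=> hq; have [q_meas q_bnd _ _] := policy_facts hq.
have qD i : measurable_fun D (fun x => (q i x)%:E).
  by apply/measurable_EFinP; apply: measurable_funS (q_meas i).
have q_ge0 i x : D x -> (0 <= (q i x)%:E)%E.
  by move=> Dx; rewrite lee_fin; case/andP: (q_bnd x (D_ge0 Dx) i).
under eq_integral do rewrite EFinD -sumEFin.
rewrite (@ge0_integralD _ _ _ mu D D_meas (fun x => (shortfall q x)%:E)) //.
- rewrite integral_sum_filter // -sumEFin; congr (_ + _)%E.
  by apply: eq_bigr => i _; exact: integral_rate.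
- by move=> x Dx; rewrite lee_fin le_max lexx orbT.
- apply/measurable_EFinP; apply: measurable_maxr; last exact: measurable_cst.
  apply: measurable_funB => //; apply: measurable_sum_filter => i.
  by apply: measurable_funS (q_meas i).
- by move=> x Dx; apply: sume_ge0 => i _; exact: q_ge0.
- rewrite (_ : (fun x => _) = (fun x => (\sum_(i | Pr i) q i x)%:E)).
    apply/measurable_EFinP; apply: measurable_sum_filter => i.
    by apply: measurable_funS (q_meas i).
  by apply/funext => x; rewrite sumEFin.
Qed.

Variable g : S -> R -> R.
Hypothesis P_gt0 : forall i, 0 < P i.
Hypothesis g_ggddf : ggddf Ebar P E0 d g.

(* GGDDF has no shortfall on [0, T] as soon as some admissible policy has
   none: integrate the pointwise bound with K the stores nonempty at T. *)
Lemma ggddf_serves_if_feasible (r : S -> R -> R) : policy Ebar P E0 d r ->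
  unserved d r T = 0%E -> unserved d g T = 0%E.
Proof.
move=> hr hu; pose K i := 0 < energy E0 g i T.
have [_ r_bnd r_dem r_en] := policy_facts hr.
have integrated :
    (unserved d g T + (\sum_(i | ~~ K i) (E0 i - energy E0 g i T))%:E <=
     unserved d r T + (\sum_(i | ~~ K i) (E0 i - energy E0 r i T))%:E)%E.
  rewrite -!integral_shortfall_drained //; last exact: g_ggddf.1.
  apply: ae_ge0_le_integral => //.
  - have [_ g_bnd _ _] := policy_facts g_ggddf.1.
    move=> x Dx; rewrite lee_fin addr_ge0 ?le_max ?lexx ?orbT //.
    by apply: sumr_ge0 => i _; case/andP: (g_bnd x (D_ge0 Dx) i).
  - exact: shortfall_drained_measurable g_ggddf.1.
  - move=> x Dx; rewrite lee_fin addr_ge0 ?le_max ?lexx ?orbT //.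
    by apply: sumr_ge0 => i _; case/andP: (r_bnd x (D_ge0 Dx) i).
  - exact: shortfall_drained_measurable.
  apply: (@filterS _ _ (ae_filter_ringOfSetsType mu) _ _ _ g_ggddf.2).
  move=> x hx Dx; rewrite lee_fin.
  apply: (shortfall_pointwise (T := T) P_gt0 g_ggddf) => //.
  - by move=> i; rewrite /K -leNgt.
  - exact: r_bnd (D_ge0 Dx).
  - exact: r_dem (D_ge0 Dx).
  - exact: hx (D_ge0 Dx).
have drained_le : \sum_(i | ~~ K i) (E0 i - energy E0 r i T) <=
                  \sum_(i | ~~ K i) (E0 i - energy E0 g i T).
  apply: ler_sum => i nK.
  have g_empty : energy E0 g i T <= 0 by rewrite leNgt.
  by have := r_en T T_ge0 i; lra.
have : (0 <= unserved d g T)%E.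
  by apply: integral_ge0 => x Dx; rewrite lee_fin le_max lexx orbT.
move: integrated; rewrite hu add0e; case: (unserved d g T) => [u| |] //.
rewrite -EFinD !lee_fin => le_u u_ge0; congr EFin; lra.
Qed.

End Integration.

Theorem mainTheorem5 (R : realType) (S : finType)
  (Ebar P E0 : S -> R) (d : R -> R)
  (hEbar : forall i, 0 < Ebar i) (hP : forall i, 0 < P i)
  (hE0 : forall i, 0 <= E0 i <= Ebar i)
  (hd : forall t, 0 <= t -> 0 <= d t)
  (hdint : forall T, 0 <= T ->
     (@lebesgue_measure R).-integrable `[0, T] (fun t => (d t)%:E))
  (g : S -> R -> R) (hg : ggddf Ebar P E0 d g) :
  forall r : S -> R -> R, policy Ebar P E0 d r -> (tau d r <= tau d g)%E.
Proof.
move=> r hr; apply: ereal_sup_le; apply: image_subset => T [T0 hu]; split => //.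
exact: (ggddf_serves_if_feasible T0 (hdint T T0) hP hg hr hu).
Qed.
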